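(* For $r\ge1$ let $A_1^r=\{(\alpha_1,\alpha_2,\alpha_3)\in\mathbb{Z}_{\ge0}^3:\alpha_1\le1,\ \alpha_3=0,\ |\alpha|\le r\}$, $A_2^r=\{(\alpha_1,\alpha_2,\alpha_3):\alpha_1\le1,\ \alpha_2=0,\ \alpha_3\ge1,\ |\alpha|\le r\}$ and $\mathcal F_r=A_1^r\cup A_2^r$. Let $f(x|\theta,v,m)$ be the skew-normal kernel. Then for every $\alpha=(\alpha_1,\alpha_2,\alpha_3)\in\mathbb{Z}_{\ge0}^3$ there are polynomials $P^{\kappa}_{\alpha}(m)$, $H^{\kappa}_{\alpha}(m)$, $Q^{\kappa}_{\alpha}(v)$ (indexed by $\kappa$ in the set below), with $H^\kappa_\alpha(m)\ne0$ for $m\neq0$ and $Q^\kappa_\alpha(v)\ne0$ for $v>0$, such that for all $x,\theta\in\mathbb{R}$, $v>0$ and $m\neq0$, $$\frac{\partial^{|\alpha|}f}{\partial\theta^{\alpha_1}\partial v^{\alpha_2}\partial m^{\alpha_3}}=\sum_{\kappa}\frac{P^{\kappa}_{\alpha}(m)}{H^{\kappa}_{\alpha}(m)Q^{\kappa}_{\alpha}(v)}\frac{\partial^{|\kappa|}f}{\partial\theta^{\kappa_1}\partial v^{\kappa_2}\partial m^{\kappa_3}},$$ where the sum ranges over $\kappa\in\mathcal F_{|\alpha|}$ with $\kappa_1+2\kappa_2+2\kappa_3\le\alpha_1+2\alpha_2+2\alpha_3$.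
   Context: Skew-normal kernel: $f(x|\theta,v,m)=\frac{2}{\sigma}\varphi\!\left(\frac{x-\theta}{\sigma}\right)\Phi\!\left(\frac{m(x-\theta)}{\sigma}\right)$ with $\sigma=\sqrt v$, $\varphi,\Phi$ the standard normal density and cdf. $|\alpha|=\alpha_1+\alpha_2+\alpha_3$. *)

From Stdlib Require Import Reals Lra Lia Arith List ClassicalEpsilon.
Open Scope R_scope.

Definition phi (z : R) : R := / sqrt (2 * PI) * exp (- (z ^ 2) / 2).

Lemma phi_continuity : continuity phi.
Proof.
  unfold phi. intro z.
  apply continuity_pt_mult.
  - apply continuity_pt_const. intros a b; reflexivity.
  - apply (continuity_pt_comp (fun z => - (z ^ 2) / 2) exp).
    + reg.
    + apply derivable_continuous_pt. apply derivable_pt_exp.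
Qed.

Lemma phi_integrable (a b : R) : Riemann_integrable phi a b.
Proof.
  destruct (Rle_dec a b) as [H|H].
  - apply continuity_implies_RiemannInt; [exact H|].
    intros; apply phi_continuity.
  - apply RiemannInt_P1. apply continuity_implies_RiemannInt; [lra|].
    intros; apply phi_continuity.
Qed.

Definition Phi (z : R) : R := / 2 + RiemannInt (phi_integrable 0 z).

Definition skewf (x theta v m : R) : R :=
  2 / sqrt v * phi ((x - theta) / sqrt v) * Phi (m * (x - theta) / sqrt v).

(** Derivative of a one-variable function at a point: the (unique) l with
    derivable_pt_lim g x l, chosen by classical description (when it exists). *)
Definition Dpt (g : R -> R) (x : R) : R :=
  epsilon (inhabits 0) (fun l => derivable_pt_lim g x l).

Definition d_theta (F : R -> R -> R -> R) : R -> R -> R -> R :=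
  fun t v m => Dpt (fun t' => F t' v m) t.
Definition d_v (F : R -> R -> R -> R) : R -> R -> R -> R :=
  fun t v m => Dpt (fun v' => F t v' m) v.
Definition d_m (F : R -> R -> R -> R) : R -> R -> R -> R :=
  fun t v m => Dpt (fun m' => F t v m') m.

Definition pderiv (a1 a2 a3 : nat) (F : R -> R -> R -> R) : R -> R -> R -> R :=
  Nat.iter a1 d_theta (Nat.iter a2 d_v (Nat.iter a3 d_m F)).

(** Univariate real polynomials as coefficient lists (constant term first). *)
Definition rpoly := list R.
Definition peval (p : rpoly) (x : R) : R := fold_right (fun a acc => a + x * acc) 0 p.

Definition inF (r k1 k2 k3 : nat) : bool :=
  (k1 <=? 1)%nat && (k1 + k2 + k3 <=? r)%nat &&
  ((k3 =? 0)%nat || ((k2 =? 0)%nat && (1 <=? k3)%nat)).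

Definition idx (a1 a2 a3 k1 k2 k3 : nat) : bool :=
  inF (a1 + a2 + a3) k1 k2 k3 &&
  (k1 + 2 * k2 + 2 * k3 <=? a1 + 2 * a2 + 2 * a3)%nat.

(** Sum over k1 in 0..1, k2 in 0..r, k3 in 0..r of the terms with idx true
    (this covers all of F_r since |kappa| <= r). *)
Definition idx_sum (a1 a2 a3 : nat) (T : nat -> nat -> nat -> R) : R :=
  let r := (a1 + a2 + a3)%nat in
  sum_f_R0 (fun k1 => sum_f_R0 (fun k2 => sum_f_R0 (fun k3 =>
    if idx a1 a2 a3 k1 k2 k3 then T k1 k2 k3 else 0) r) r) 1.

From Stdlib Require Import Reals Lra Lia List Bool FunctionalExtensionality ClassicalEpsilon.
From Coquelicot Require Import Coquelicot.
Open Scope R_scope.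

(* Write z = (x - theta) / sqrt v.  Every partial derivative of f is a finite sum of monomials
   c m^i (x - theta)^j v^(-k/2) K, where the kernel K is either phi(z) Phi(m z) or
   phi(z) phi(m z); differentiating such sums is a symbolic operation, which gives closed
   forms for all derivatives of f.  The density satisfies the two linear relations
     d^2f/dtheta^2 = 2 df/dv - m (1 + m^2) / v * df/dm,
     d^2f/dv dm    = - (1 + m^2) / (2 m v) * d^2f/dm^2 - 1 / v * df/dm,
   which eliminate a second theta-derivative and every mixed (v, m)-derivative.  Using them
   and the commutation of derivatives, induction on alpha writes d^alpha f as a combination
   of the d^kappa f, kappa in F_|alpha|, with coefficients P(m) / H(m) * v^-d.  Each
   theta-derivative costs a factor v^(-1/2) and each v-derivative a factor v^-1, so
   2 d + kappa1 + 2 kappa2 = alpha1 + 2 alpha2: the power of v depends only on kappa, and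
   the coefficients of equal kappa add up to a single rational function of m. *)

Lemma is_derive_Phi z : is_derive Phi z (phi z).
Proof.
  assert (phi_cont : forall y, continuous phi y).
  { intro y. apply continuity_pt_filterlim, phi_continuity. }
  replace Phi with (fun y => / 2 + RInt phi 0 y).
  2:{ apply functional_extensionality; intro y.
      unfold Phi. now rewrite (RInt_Reals _ _ _ (phi_integrable 0 y)). }
  rewrite <- (Rplus_0_l (phi z)).
  apply (is_derive_plus (fun _ => / 2)); [apply (@is_derive_const R_AbsRing R_NormedModule)|].
  apply (is_derive_RInt _ _ 0); [|apply phi_cont].
  apply filter_forall; intro b. apply (@RInt_correct R_CompleteNormedModule).
  apply (@ex_RInt_continuous R_CompleteNormedModule). intros; apply phi_cont.
Qed.

Lemma Dpt_is_derive g y l : is_derive g y l -> Dpt g y = l.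
Proof.
  intro Hl. apply is_derive_Reals in Hl.
  apply (uniqueness_limite g y _ _); [|exact Hl].
  unfold Dpt. apply epsilon_spec. now exists l.
Qed.

Lemma is_derive_eq_loc (f g : R -> R) y lf lg :
  locally y (fun z => f z = g z) -> is_derive f y lf -> is_derive g y lg -> lf = lg.
Proof.
  intros Efg Df Dg. apply (is_derive_ext_loc _ _ _ _ Efg), is_derive_unique in Df.
  rewrite <- Df. now apply is_derive_unique.
Qed.

Lemma is_derive_mult_eq (f g : R -> R) y df dg l :
  is_derive f y df -> is_derive g y dg -> df * g y + f y * dg = l ->
  is_derive (fun z => f z * g z) y l.
Proof. intros Df Dg <-. now apply Derive.is_derive_mult. Qed.

Lemma locally_pos v : 0 < v -> locally v (fun z => 0 < z).
Proof. intro Hv. now apply (open_gt 0). Qed.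

Lemma locally_neq0 m : m <> 0 -> locally m (fun z => z <> 0).
Proof. intro Hm. now apply (open_neq 0). Qed.

Definition lsum {A} (f : A -> R) (L : list A) : R := fold_right (fun a s => f a + s) 0 L.

Lemma lsum_cons {A} (f : A -> R) a L : lsum f (a :: L) = f a + lsum f L.
Proof. reflexivity. Qed.

Lemma lsum_app {A} (f : A -> R) L1 L2 : lsum f (L1 ++ L2) = lsum f L1 + lsum f L2.
Proof. induction L1 as [|a L1 IH]; simpl; rewrite ?IH; ring. Qed.

Lemma lsum_map {A B} (f : B -> R) (g : A -> B) L : lsum f (map g L) = lsum (fun a => f (g a)) L.
Proof. induction L as [|a L IH]; simpl; rewrite ?IH; reflexivity. Qed.

Lemma lsum_flat_map {A B} (f : B -> R) (g : A -> list B) L :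
  lsum f (flat_map g L) = lsum (fun a => lsum f (g a)) L.
Proof. induction L as [|a L IH]; simpl; rewrite ?lsum_app, ?IH; reflexivity. Qed.

Lemma lsum_scal {A} c (f : A -> R) L : lsum (fun a => c * f a) L = c * lsum f L.
Proof. induction L as [|a L IH]; simpl; rewrite ?IH; ring. Qed.

Lemma lsum_ext {A} (f g : A -> R) L : (forall a, In a L -> f a = g a) -> lsum f L = lsum g L.
Proof.
  induction L as [|a L IH]; intro E; simpl; [reflexivity|].
  rewrite E by (simpl; auto). f_equal. apply IH. intros b Hb. apply E. now right.
Qed.

Lemma is_derive_lsum {A} (F : A -> R -> R) (F' : A -> R) L y :
  (forall a, In a L -> is_derive (F a) y (F' a)) ->
  is_derive (fun z => lsum (fun a => F a z) L) y (lsum F' L).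
Proof.
  induction L as [|a L IH]; intro D; simpl; [apply (@is_derive_const R_AbsRing R_NormedModule)|].
  apply (is_derive_plus (F a)); [apply D; now left|].
  apply IH. intros b Hb. apply D. now right.
Qed.

(** * Symbolic derivatives of the skew-normal kernel *)

Definition gauss (z : R) : R := exp (- z ^ 2 / 2).
Definition phi_norm : R := / sqrt (2 * PI).

Lemma is_derive_gauss z : is_derive gauss z (- z * gauss z).
Proof.
  unfold gauss. auto_derive; [auto|].
  replace (- (z * (z * 1)) * / 2) with (- z ^ 2 / 2) by field. field.
Qed.

Lemma is_derive_gauss_comp (g : R -> R) y l :
  is_derive g y l -> is_derive (fun z => gauss (g z)) y (- g y * l * gauss (g y)).
Proof.
  intro Dg. replace (- g y * l * gauss (g y)) with (scal l (- g y * gauss (g y))).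
  - apply (is_derive_comp gauss g); [apply is_derive_gauss|exact Dg].
  - unfold scal; simpl; unfold mult; simpl. ring.
Qed.

Lemma is_derive_Phi_comp (g : R -> R) y l :
  is_derive g y l -> is_derive (fun z => Phi (g z)) y (phi_norm * l * gauss (g y)).
Proof.
  intro Dg. replace (phi_norm * l * gauss (g y)) with (scal l (phi (g y))).
  - apply (is_derive_comp Phi g); [apply is_derive_Phi|exact Dg].
  - unfold scal; simpl; unfold mult; simpl. unfold phi, phi_norm, gauss. ring.
Qed.

Inductive mono := Mono (c : R) (i j k : nat) (b : bool).

Definition mono_mul (c : R) (i j k : nat) (M : mono) : mono :=
  let 'Mono c' i' j' k' b := M in Mono (c * c') (i' + i) (j' + j) (k' + k) b.

Section Evaluation.
Variable x : R.

(* [gauss z = sqrt (2 PI) * phi z]; [b] selects the kernel phi(z) Phi(m z) or phi(z) phi(m z). *)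
Definition kernel (b : bool) (t v m : R) : R :=
  gauss ((x - t) / sqrt v) *
  (if b then Phi (m * ((x - t) / sqrt v)) else gauss (m * ((x - t) / sqrt v))).

Definition eval_mono (t v m : R) (M : mono) : R :=
  let 'Mono c i j k b := M in c * m ^ i * (x - t) ^ j * (/ sqrt v) ^ k * kernel b t v m.

Definition eval_expr (t v m : R) (T : list mono) : R := lsum (eval_mono t v m) T.

Lemma eval_expr_cons t v m M T :
  eval_expr t v m (M :: T) = eval_mono t v m M + eval_expr t v m T.
Proof. reflexivity. Qed.

Lemma eval_expr_mul t v m c i j k T :
  eval_expr t v m (map (mono_mul c i j k) T) =
  c * m ^ i * (x - t) ^ j * (/ sqrt v) ^ k * eval_expr t v m T.
Proof.
  unfold eval_expr. rewrite lsum_map, <- lsum_scal.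
  apply lsum_ext. intros [c' i' j' k' b] _. simpl. rewrite !pow_add. ring.
Qed.

End Evaluation.

Definition Dt_kernel (b : bool) : list mono :=
  if b then Mono 1 0 1 2 true :: Mono (- phi_norm) 1 0 1 false :: nil
  else Mono 1 0 1 2 false :: Mono 1 2 1 2 false :: nil.
Definition Dv_kernel (b : bool) : list mono :=
  if b then Mono (/ 2) 0 2 4 true :: Mono (- phi_norm / 2) 1 1 3 false :: nil
  else Mono (/ 2) 0 2 4 false :: Mono (/ 2) 2 2 4 false :: nil.
Definition Dm_kernel (b : bool) : list mono :=
  if b then Mono phi_norm 0 1 1 false :: nil else Mono (-1) 1 2 2 false :: nil.

(* Leibniz rule; for [j = 0] (resp. [k = 0], [i = 0]) the first monomial has coefficient 0. *)
Definition Dt_mono (M : mono) : list mono :=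
  let 'Mono c i j k b := M in
  Mono (- (c * INR j)) i (pred j) k b :: map (mono_mul c i j k) (Dt_kernel b).
Definition Dv_mono (M : mono) : list mono :=
  let 'Mono c i j k b := M in
  Mono (- (c * INR k / 2)) i j (S (S k)) b :: map (mono_mul c i j k) (Dv_kernel b).
Definition Dm_mono (M : mono) : list mono :=
  let 'Mono c i j k b := M in
  Mono (c * INR i) (pred i) j k b :: map (mono_mul c i j k) (Dm_kernel b).

Definition Dt (T : list mono) : list mono := flat_map Dt_mono T.
Definition Dv (T : list mono) : list mono := flat_map Dv_mono T.
Definition Dm (T : list mono) : list mono := flat_map Dm_mono T.

Section Derivatives.
Variables (x t v m : R).
Hypothesis Hv : 0 < v.

Let Hs : sqrt v <> 0.
Proof. apply Rgt_not_eq, sqrt_lt_R0, Hv. Qed.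

Lemma is_derive_Dt_kernel b :
  is_derive (fun y => kernel x b y v m) t (eval_expr x t v m (Dt_kernel b)).
Proof.
  assert (Dz : is_derive (fun y => (x - y) / sqrt v) t (- / sqrt v))
    by (auto_derive; [auto|field; auto]).
  assert (Dmz : is_derive (fun y => m * ((x - y) / sqrt v)) t (- m / sqrt v))
    by (auto_derive; [auto|field; auto]).
  destruct b; unfold kernel.
  - eapply is_derive_mult_eq; [apply is_derive_gauss_comp, Dz|apply is_derive_Phi_comp, Dmz|].
    unfold eval_expr, lsum, eval_mono, kernel; simpl. field; auto.
  - eapply is_derive_mult_eq; [apply is_derive_gauss_comp, Dz|apply is_derive_gauss_comp, Dmz|].
    unfold eval_expr, lsum, eval_mono, kernel; simpl. field; auto.
Qed.

Lemma is_derive_Dv_kernel b :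
  is_derive (fun y => kernel x b t y m) v (eval_expr x t v m (Dv_kernel b)).
Proof.
  assert (Dz : is_derive (fun y => (x - t) / sqrt y) v (- (x - t) * (/ sqrt v) ^ 3 / 2))
    by (auto_derive; [auto|field; auto]).
  assert (Dmz : is_derive (fun y => m * ((x - t) / sqrt y)) v (- m * (x - t) * (/ sqrt v) ^ 3 / 2))
    by (auto_derive; [auto|field; auto]).
  destruct b; unfold kernel.
  - eapply is_derive_mult_eq; [apply is_derive_gauss_comp, Dz|apply is_derive_Phi_comp, Dmz|].
    unfold eval_expr, lsum, eval_mono, kernel; simpl. field; auto.
  - eapply is_derive_mult_eq; [apply is_derive_gauss_comp, Dz|apply is_derive_gauss_comp, Dmz|].
    unfold eval_expr, lsum, eval_mono, kernel; simpl. field; auto.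
Qed.

Lemma is_derive_Dm_kernel b :
  is_derive (fun y => kernel x b t v y) m (eval_expr x t v m (Dm_kernel b)).
Proof.
  assert (Dz : is_derive (fun _ : R => (x - t) / sqrt v) m 0) by (auto_derive; [auto|ring]).
  assert (Dmz : is_derive (fun y => y * ((x - t) / sqrt v)) m ((x - t) / sqrt v))
    by (auto_derive; [auto|ring]).
  destruct b; unfold kernel.
  - eapply is_derive_mult_eq; [apply is_derive_gauss_comp, Dz|apply is_derive_Phi_comp, Dmz|].
    unfold eval_expr, lsum, eval_mono, kernel; simpl. field; auto.
  - eapply is_derive_mult_eq; [apply is_derive_gauss_comp, Dz|apply is_derive_gauss_comp, Dmz|].
    unfold eval_expr, lsum, eval_mono, kernel; simpl. field; auto.
Qed.

Lemma is_derive_Dt_mono M :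
  is_derive (fun y => eval_mono x y v m M) t (eval_expr x t v m (Dt_mono M)).
Proof.
  destruct M as [c i j k b]. simpl eval_mono.
  eapply is_derive_mult_eq; [auto_derive; [auto|reflexivity]|apply is_derive_Dt_kernel|].
  unfold Dt_mono. rewrite eval_expr_cons, eval_expr_mul. simpl eval_mono. unfold Rminus. ring.
Qed.

Lemma is_derive_Dv_mono M :
  is_derive (fun y => eval_mono x t y m M) v (eval_expr x t v m (Dv_mono M)).
Proof.
  destruct M as [c i j k b]. simpl eval_mono.
  eapply is_derive_mult_eq; [auto_derive; [auto|reflexivity]|apply is_derive_Dv_kernel|].
  unfold Dv_mono. rewrite eval_expr_cons, eval_expr_mul. simpl eval_mono.
  destruct k; simpl; field; auto.
Qed.

Lemma is_derive_Dm_mono M :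
  is_derive (fun y => eval_mono x t v y M) m (eval_expr x t v m (Dm_mono M)).
Proof.
  destruct M as [c i j k b]. simpl eval_mono.
  eapply is_derive_mult_eq; [auto_derive; [auto|reflexivity]|apply is_derive_Dm_kernel|].
  unfold Dm_mono. rewrite eval_expr_cons, eval_expr_mul. simpl eval_mono. ring.
Qed.

Lemma is_derive_Dt T : is_derive (fun y => eval_expr x y v m T) t (eval_expr x t v m (Dt T)).
Proof.
  unfold Dt, eval_expr at 2. rewrite lsum_flat_map.
  apply (is_derive_lsum (fun M y => eval_mono x y v m M)). intros; apply is_derive_Dt_mono.
Qed.

Lemma is_derive_Dv T : is_derive (fun y => eval_expr x t y m T) v (eval_expr x t v m (Dv T)).
Proof.
  unfold Dv, eval_expr at 2. rewrite lsum_flat_map.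
  apply (is_derive_lsum (fun M y => eval_mono x t y m M)). intros; apply is_derive_Dv_mono.
Qed.

Lemma is_derive_Dm T : is_derive (fun y => eval_expr x t v y T) m (eval_expr x t v m (Dm T)).
Proof.
  unfold Dm, eval_expr at 2. rewrite lsum_flat_map.
  apply (is_derive_lsum (fun M y => eval_mono x t v y M)). intros; apply is_derive_Dm_mono.
Qed.

End Derivatives.

Definition expr_equiv (T1 T2 : list mono) : Prop :=
  forall x t v m, 0 < v -> eval_expr x t v m T1 = eval_expr x t v m T2.

Lemma expr_equiv_sym T1 T2 : expr_equiv T1 T2 -> expr_equiv T2 T1.
Proof. intros E x t v m Hv. symmetry. now apply E. Qed.

Lemma expr_equiv_trans T1 T2 T3 : expr_equiv T1 T2 -> expr_equiv T2 T3 -> expr_equiv T1 T3.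
Proof. intros E12 E23 x t v m Hv. now rewrite E12, E23. Qed.

Lemma expr_equiv_Dt T1 T2 : expr_equiv T1 T2 -> expr_equiv (Dt T1) (Dt T2).
Proof.
  intros E x t v m Hv.
  apply (is_derive_eq_loc (fun y => eval_expr x y v m T1) (fun y => eval_expr x y v m T2) t).
  - apply filter_forall. intro. now apply E.
  - now apply is_derive_Dt.
  - now apply is_derive_Dt.
Qed.

Lemma Dt_Dv_comm T : expr_equiv (Dt (Dv T)) (Dv (Dt T)).
Proof.
  intros x t v m Hv. assert (Hs : sqrt v <> 0) by (apply Rgt_not_eq, sqrt_lt_R0, Hv).
  unfold Dt, Dv, eval_expr. rewrite !lsum_flat_map. apply lsum_ext. intros [c i j k b] _.
  destruct b, j, k; simpl; rewrite ?S_INR; field; auto.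
Qed.

Lemma Dt_Dm_comm T : expr_equiv (Dt (Dm T)) (Dm (Dt T)).
Proof.
  intros x t v m Hv. assert (Hs : sqrt v <> 0) by (apply Rgt_not_eq, sqrt_lt_R0, Hv).
  unfold Dt, Dm, eval_expr. rewrite !lsum_flat_map. apply lsum_ext. intros [c i j k b] _.
  destruct b, i, j; simpl; rewrite ?S_INR; field; auto.
Qed.

Lemma Dv_Dm_comm T : expr_equiv (Dv (Dm T)) (Dm (Dv T)).
Proof.
  intros x t v m Hv. assert (Hs : sqrt v <> 0) by (apply Rgt_not_eq, sqrt_lt_R0, Hv).
  unfold Dv, Dm, eval_expr. rewrite !lsum_flat_map. apply lsum_ext. intros [c i j k b] _.
  destruct b, i, k; simpl; rewrite ?S_INR; field; auto.
Qed.

(** * The partial derivatives of the skew-normal density *)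

Definition skew_expr : list mono := Mono (2 * phi_norm) 0 0 1 true :: nil.

Definition deriv_expr (k1 k2 k3 : nat) : list mono :=
  Nat.iter k1 Dt (Nat.iter k2 Dv (Nat.iter k3 Dm skew_expr)).

Definition represents (x : R) (F : R -> R -> R -> R) (T : list mono) : Prop :=
  forall t v m, 0 < v -> F t v m = eval_expr x t v m T.

Section Represents.
Variable x : R.

Lemma represents_skewf : represents x (skewf x) skew_expr.
Proof.
  intros t v m Hv.
  unfold skewf, skew_expr, eval_expr, lsum, eval_mono, kernel, phi, gauss, phi_norm. simpl.
  replace (m * (x - t) / sqrt v) with (m * ((x - t) / sqrt v)) by (unfold Rdiv; ring).
  unfold Rdiv. ring.
Qed.

Lemma represents_d_theta F T : represents x F T -> represents x (d_theta F) (Dt T).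
Proof.
  intros E t v m Hv. apply Dpt_is_derive.
  apply (is_derive_ext (fun y => eval_expr x y v m T)); [intro; symmetry; now apply E|].
  now apply is_derive_Dt.
Qed.

Lemma represents_d_v F T : represents x F T -> represents x (d_v F) (Dv T).
Proof.
  intros E t v m Hv. apply Dpt_is_derive.
  apply (is_derive_ext_loc (fun y => eval_expr x t y m T)); [|now apply is_derive_Dv].
  apply (filter_imp (fun y => 0 < y)); [intros; symmetry; now apply E|now apply locally_pos].
Qed.

Lemma represents_d_m F T : represents x F T -> represents x (d_m F) (Dm T).
Proof.
  intros E t v m Hv. apply Dpt_is_derive.
  apply (is_derive_ext (fun y => eval_expr x t v y T)); [intro; symmetry; now apply E|].
  now apply is_derive_Dm.
Qed.

Lemma represents_iter (op : (R -> R -> R -> R) -> R -> R -> R -> R)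
  (D : list mono -> list mono) n F T :
  (forall F T, represents x F T -> represents x (op F) (D T)) ->
  represents x F T -> represents x (Nat.iter n op F) (Nat.iter n D T).
Proof. intros HD E. induction n; simpl; auto. Qed.

Lemma represents_pderiv k1 k2 k3 : represents x (pderiv k1 k2 k3 (skewf x)) (deriv_expr k1 k2 k3).
Proof.
  apply represents_iter; [exact represents_d_theta|].
  apply represents_iter; [exact represents_d_v|].
  apply represents_iter; [exact represents_d_m|].
  exact represents_skewf.
Qed.

End Represents.

(** * Polynomials *)

Fixpoint padd (p q : rpoly) : rpoly :=
  match p, q with
  | nil, _ => q
  | _, nil => p
  | a :: p', b :: q' => (a + b) :: padd p' q'
  end.
Definition pscale (c : R) (p : rpoly) : rpoly := map (Rmult c) p.
Definition psub (p q : rpoly) : rpoly := padd p (pscale (-1) q).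
Fixpoint pmul (p q : rpoly) : rpoly :=
  match p with nil => nil | a :: p' => padd (pscale a q) (0 :: pmul p' q) end.
Fixpoint pder (p : rpoly) : rpoly :=
  match p with nil => nil | a :: p' => padd p' (0 :: pder p') end.
Definition pXn (d : nat) : rpoly := repeat 0 d ++ 1 :: nil.

Lemma peval_add p q y : peval (padd p q) y = peval p y + peval q y.
Proof.
  revert q; induction p as [|a p IH]; intros [|b q]; simpl; try ring.
  rewrite IH. ring.
Qed.

Lemma peval_scale c p y : peval (pscale c p) y = c * peval p y.
Proof. induction p as [|a p IH]; simpl; [|rewrite IH]; ring. Qed.

Lemma peval_sub p q y : peval (psub p q) y = peval p y - peval q y.
Proof. unfold psub. rewrite peval_add, peval_scale. ring. Qed.

Lemma peval_mul p q y : peval (pmul p q) y = peval p y * peval q y.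
Proof.
  induction p as [|a p IH]; simpl; [ring|].
  rewrite peval_add, peval_scale. simpl. rewrite IH. ring.
Qed.

Lemma peval_Xn d y : peval (pXn d) y = y ^ d.
Proof. induction d as [|d IH]; simpl; [|unfold pXn in IH; rewrite IH]; ring. Qed.

Lemma is_derive_peval p y : is_derive (peval p) y (peval (pder p) y).
Proof.
  induction p as [|a p IH]; simpl.
  - apply (@is_derive_const R_AbsRing R_NormedModule).
  - rewrite peval_add. simpl.
    apply (is_derive_ext (fun z => a + z * peval p z)); [reflexivity|].
    auto_derive; [now exists (peval (pder p) y)|].
    replace (Derive (fun z : R => peval p z) y) with (peval (pder p) y)
      by (symmetry; now apply is_derive_unique).
    ring.
Qed.

(** * Representation by lower-order derivatives *)

Lemma inF_spec r k1 k2 k3 :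
  inF r k1 k2 k3 = true <->
  (k1 <= 1 /\ k1 + k2 + k3 <= r /\ (k3 = 0 \/ k2 = 0 /\ 1 <= k3))%nat.
Proof.
  unfold inF. rewrite !andb_true_iff, orb_true_iff, andb_true_iff, !Nat.leb_le, !Nat.eqb_eq.
  tauto.
Qed.

Definition in_range (r w k1 k2 k3 : nat) : bool :=
  inF r k1 k2 k3 && (k1 + 2 * k2 + 2 * k3 <=? w)%nat.

Lemma in_range_spec r w k1 k2 k3 :
  in_range r w k1 k2 k3 = true <->
  (k1 <= 1 /\ k1 + k2 + k3 <= r /\ (k3 = 0 \/ k2 = 0 /\ 1 <= k3) /\ k1 + 2 * k2 + 2 * k3 <= w)%nat.
Proof. unfold in_range. rewrite andb_true_iff, inF_spec, Nat.leb_le. tauto. Qed.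

Lemma in_range_inF r w k1 k2 k3 :
  in_range r w k1 k2 k3 = true -> inF (k1 + k2 + k3) k1 k2 k3 = true.
Proof. rewrite in_range_spec, inF_spec. lia. Qed.

Inductive entry := Entry (k1 k2 k3 : nat) (P H : rpoly) (d : nat).

Definition coef (P H : rpoly) (d : nat) (v m : R) : R := peval P m / peval H m * (/ v) ^ d.

Definition eval_entry x t v m (en : entry) : R :=
  let 'Entry k1 k2 k3 P H d := en in coef P H d v m * eval_expr x t v m (deriv_expr k1 k2 k3).

Definition nonvanishing (H : rpoly) : Prop := forall m, m <> 0 -> peval H m <> 0.

(* [e] is the degree in v^(-1/2): it grows by 1 under Dt, by 2 under Dv and is kept by Dm. *)
Definition admissible (J : nat -> nat -> nat -> Prop) (r w e : nat) (en : entry) : Prop :=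
  let 'Entry k1 k2 k3 P H d := en in
  J k1 k2 k3 /\ in_range r w k1 k2 k3 = true /\ (2 * d + k1 + 2 * k2 = e)%nat /\ nonvanishing H.

Definition represented J r w e (F : R -> R -> R -> R -> R) : Prop :=
  exists L, List.Forall (admissible J r w e) L /\
    forall x t v m, 0 < v -> m <> 0 -> F x t v m = lsum (eval_entry x t v m) L.

Definition representable J r w e (T : list mono) : Prop :=
  represented J r w e (fun x t v m => eval_expr x t v m T).

Section Represented.
Variables (J : nat -> nat -> nat -> Prop) (r w e : nat).

Lemma represented_ext F G :
  (forall x t v m, 0 < v -> m <> 0 -> F x t v m = G x t v m) ->
  represented J r w e F -> represented J r w e G.
Proof.
  intros E [L [HL EL]]. exists L. split; [exact HL|].
  intros x t v m Hv Hm. rewrite <- E by assumption. now apply EL.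
Qed.

Lemma represented_lsum {A} (G : A -> R -> R -> R -> R -> R) L :
  (forall a, In a L -> represented J r w e (G a)) ->
  represented J r w e (fun x t v m => lsum (fun a => G a x t v m) L).
Proof.
  induction L as [|a L IH]; intro HG.
  - exists nil. split; [constructor|reflexivity].
  - destruct (HG a (in_eq a L)) as [La [HLa ELa]].
    destruct IH as [L' [HL' EL']]; [intros b Hb; apply HG; now right|].
    exists (La ++ L'). split; [now apply List.Forall_app|].
    intros x t v m Hv Hm. simpl. rewrite lsum_app, ELa, EL' by assumption. reflexivity.
Qed.

Lemma represented_plus F G :
  represented J r w e F -> represented J r w e G ->
  represented J r w e (fun x t v m => F x t v m + G x t v m).
Proof.
  intros HF HG.
  apply (represented_ext (fun x t v m => lsum (fun F => F x t v m) (F :: G :: nil))).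
  - intros. simpl. ring.
  - apply represented_lsum. intros a [<-|[<-|[]]]; assumption.
Qed.

Lemma representable_eq T1 T2 :
  expr_equiv T1 T2 -> representable J r w e T1 -> representable J r w e T2.
Proof. intro E. apply represented_ext. intros; auto. Qed.

Lemma representable_deriv_expr k1 k2 k3 :
  J k1 k2 k3 -> in_range r w k1 k2 k3 = true -> (k1 + 2 * k2 = e)%nat ->
  representable J r w e (deriv_expr k1 k2 k3).
Proof.
  intros Hk Hin He. exists (Entry k1 k2 k3 (1 :: nil) (1 :: nil) 0 :: nil). split.
  - repeat constructor; [exact Hk|exact Hin|lia|]. intros m _. simpl. lra.
  - intros x t v m _ _. unfold lsum, eval_entry, coef. simpl. field.
Qed.

End Represented.

Lemma represented_scale J r w e e' P H d F :
  nonvanishing H -> (2 * d + e = e')%nat -> represented J r w e F ->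
  represented J r w e' (fun x t v m => coef P H d v m * F x t v m).
Proof.
  intros HH <- [L [HL EL]].
  exists (map (fun en => let 'Entry k1 k2 k3 P' H' d' := en in
                         Entry k1 k2 k3 (pmul P P') (pmul H H') (d + d')) L).
  split.
  - apply List.Forall_map. eapply List.Forall_impl; [|exact HL].
    intros [k1 k2 k3 P' H' d'] (Hk & Hr & He & HH').
    repeat split; [assumption|assumption|lia|].
    intros m Hm. rewrite peval_mul. apply Rmult_integral_contrapositive. auto.
  - intros x t v m Hv Hm. rewrite EL by assumption. rewrite lsum_map, <- lsum_scal.
    apply lsum_ext. intros [k1 k2 k3 P' H' d'] _. simpl.
    unfold coef. rewrite !peval_mul, pow_add. unfold Rdiv. rewrite Rinv_mult. ring.
Qed.

Lemma represented_weaken J J' r r' w w' e F :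
  (forall k1 k2 k3, J k1 k2 k3 -> J' k1 k2 k3) -> (r <= r')%nat -> (w <= w')%nat ->
  represented J r w e F -> represented J' r' w' e F.
Proof.
  intros HJ Hr Hw [L [HL EL]]. exists L. split; [|exact EL].
  eapply List.Forall_impl; [|exact HL]. intros [k1 k2 k3 P H d] (Hk & Hin & He & HH).
  rewrite in_range_spec in Hin. repeat split; auto. apply in_range_spec. lia.
Qed.

Lemma representable_le J r r' w w' e e' T :
  (r <= r')%nat -> (w <= w')%nat -> e = e' ->
  representable J r w e T -> representable J r' w' e' T.
Proof. intros Hr Hw <-. now apply (represented_weaken J J r r' w w'). Qed.

Definition Dt_entry (en : entry) x t v m : R :=
  let 'Entry k1 k2 k3 P H d := en in coef P H d v m * eval_expr x t v m (Dt (deriv_expr k1 k2 k3)).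
Definition Dv_entry (en : entry) x t v m : R :=
  let 'Entry k1 k2 k3 P H d := en in
  coef (pscale (- INR d) P) H (S d) v m * eval_expr x t v m (deriv_expr k1 k2 k3) +
  coef P H d v m * eval_expr x t v m (Dv (deriv_expr k1 k2 k3)).
Definition Dm_entry (en : entry) x t v m : R :=
  let 'Entry k1 k2 k3 P H d := en in
  coef (psub (pmul (pder P) H) (pmul P (pder H))) (pmul H H) d v m
    * eval_expr x t v m (deriv_expr k1 k2 k3) +
  coef P H d v m * eval_expr x t v m (Dm (deriv_expr k1 k2 k3)).

Section EntryDerivatives.
Variables (x t v m : R).
Hypothesis Hv : 0 < v.

Lemma is_derive_Dt_entry en : is_derive (fun y => eval_entry x y v m en) t (Dt_entry en x t v m).
Proof. destruct en. apply is_derive_scal, is_derive_Dt, Hv. Qed.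

Lemma is_derive_Dv_entry en : is_derive (fun y => eval_entry x t y m en) v (Dv_entry en x t v m).
Proof.
  destruct en as [k1 k2 k3 P H d]. simpl.
  eapply is_derive_mult_eq; [|apply is_derive_Dv, Hv|].
  - apply is_derive_scal. auto_derive; [lra|reflexivity].
  - unfold coef. rewrite peval_scale.
    destruct d as [|d]; [|rewrite S_INR]; simpl; unfold Rdiv; rewrite Rinv_mult; ring.
Qed.

Lemma is_derive_Dm_entry k1 k2 k3 P H d : m <> 0 -> nonvanishing H ->
  is_derive (fun y => eval_entry x t v y (Entry k1 k2 k3 P H d)) m
    (Dm_entry (Entry k1 k2 k3 P H d) x t v m).
Proof.
  intros Hm HH. specialize (HH m Hm). simpl.
  eapply is_derive_mult_eq; [|apply is_derive_Dm, Hv|].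
  - eapply (is_derive_mult_eq (fun y => peval P y / peval H y) (fun _ => (/ v) ^ d)).
    + apply is_derive_div; [apply is_derive_peval|apply is_derive_peval|exact HH].
    + apply (@is_derive_const R_AbsRing R_NormedModule).
    + reflexivity.
  - unfold coef. rewrite peval_sub, !peval_mul. change zero with 0. field. exact HH.
Qed.
End EntryDerivatives.

Definition Dt_reduces (J J' : nat -> nat -> nat -> Prop) : Prop :=
  forall k1 k2 k3, J k1 k2 k3 -> inF (k1 + k2 + k3) k1 k2 k3 = true ->
  representable J' (S (k1 + k2 + k3)) (S (k1 + 2 * k2 + 2 * k3)) (S (k1 + 2 * k2))
    (Dt (deriv_expr k1 k2 k3)).
Definition Dv_reduces (J J' : nat -> nat -> nat -> Prop) : Prop :=
  forall k1 k2 k3, J k1 k2 k3 -> inF (k1 + k2 + k3) k1 k2 k3 = true ->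
  representable J' (S (k1 + k2 + k3)) (S (S (k1 + 2 * k2 + 2 * k3))) (S (S (k1 + 2 * k2)))
    (Dv (deriv_expr k1 k2 k3)).
Definition Dm_reduces (J J' : nat -> nat -> nat -> Prop) : Prop :=
  forall k1 k2 k3, J k1 k2 k3 -> inF (k1 + k2 + k3) k1 k2 k3 = true ->
  representable J' (S (k1 + k2 + k3)) (S (S (k1 + 2 * k2 + 2 * k3))) (k1 + 2 * k2)
    (Dm (deriv_expr k1 k2 k3)).

Section Closure.
Variables (J J' : nat -> nat -> nat -> Prop) (r w e : nat).

Lemma representable_Dt T :
  Dt_reduces J J' -> representable J r w e T -> representable J' (S r) (S w) (S e) (Dt T).
Proof.
  intros HD [L [HL EL]].
  apply (represented_ext _ _ _ _ (fun x t v m => lsum (fun en => Dt_entry en x t v m) L)).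
  - intros x t v m Hv Hm.
    apply (is_derive_eq_loc (fun y => lsum (eval_entry x y v m) L)
                            (fun y => eval_expr x y v m T) t).
    + apply filter_forall. intro y. symmetry. now apply EL.
    + apply (is_derive_lsum (fun en y => eval_entry x y v m en)).
      intros; now apply is_derive_Dt_entry.
    + now apply is_derive_Dt.
  - apply represented_lsum. intros [k1 k2 k3 P H d] Hin.
    destruct (proj1 (List.Forall_forall _ _) HL _ Hin) as (Hk & Hr & He & HH).
    pose proof (HD k1 k2 k3 Hk (in_range_inF _ _ _ _ _ Hr)) as HDk.
    apply in_range_spec in Hr. simpl.
    apply (represented_weaken J' J' (S (k1 + k2 + k3)) (S r) (S (k1 + 2 * k2 + 2 * k3)) (S w));
      auto; try lia.
    apply (represented_scale _ _ _ (S (k1 + 2 * k2)) _ P H d _ HH); [lia|exact HDk].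
Qed.

Lemma representable_Dv T :
  Dv_reduces J J' -> (forall k1 k2 k3, J k1 k2 k3 -> J' k1 k2 k3) ->
  representable J r w e T -> representable J' (S r) (S (S w)) (S (S e)) (Dv T).
Proof.
  intros HD HJ [L [HL EL]].
  apply (represented_ext _ _ _ _ (fun x t v m => lsum (fun en => Dv_entry en x t v m) L)).
  - intros x t v m Hv Hm.
    apply (is_derive_eq_loc (fun y => lsum (eval_entry x t y m) L)
                            (fun y => eval_expr x t y m T) v).
    + apply (filter_imp (fun y => 0 < y)); [|now apply locally_pos].
      intros y Hy. symmetry. now apply EL.
    + apply (is_derive_lsum (fun en y => eval_entry x t y m en)).
      intros; now apply is_derive_Dv_entry.
    + now apply is_derive_Dv.
  - apply represented_lsum. intros [k1 k2 k3 P H d] Hin.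
    destruct (proj1 (List.Forall_forall _ _) HL _ Hin) as (Hk & Hr & He & HH).
    pose proof (HD k1 k2 k3 Hk (in_range_inF _ _ _ _ _ Hr)) as HDk.
    apply in_range_spec in Hr. simpl.
    apply represented_plus.
    + apply (represented_scale _ _ _ (k1 + 2 * k2) _ _ H (S d) _ HH); [lia|].
      apply representable_deriv_expr; [auto|apply in_range_spec; lia|lia].
    + apply (represented_weaken J' J' (S (k1 + k2 + k3)) (S r)
                                  (S (S (k1 + 2 * k2 + 2 * k3))) (S (S w))); auto; try lia.
      apply (represented_scale _ _ _ (S (S (k1 + 2 * k2))) _ P H d _ HH); [lia|exact HDk].
Qed.

Lemma representable_Dm T :
  Dm_reduces J J' -> (forall k1 k2 k3, J k1 k2 k3 -> J' k1 k2 k3) ->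
  representable J r w e T -> representable J' (S r) (S (S w)) e (Dm T).
Proof.
  intros HD HJ [L [HL EL]].
  apply (represented_ext _ _ _ _ (fun x t v m => lsum (fun en => Dm_entry en x t v m) L)).
  - intros x t v m Hv Hm.
    apply (is_derive_eq_loc (fun y => lsum (eval_entry x t v y) L)
                            (fun y => eval_expr x t v y T) m).
    + apply (filter_imp (fun y => y <> 0)); [|now apply locally_neq0].
      intros y Hy. symmetry. now apply EL.
    + apply (is_derive_lsum (fun en y => eval_entry x t v y en)). intros [k1 k2 k3 P H d] Hin.
      apply is_derive_Dm_entry; [exact Hv|exact Hm|].
      now destruct (proj1 (List.Forall_forall _ _) HL _ Hin) as (_ & _ & _ & HH).
    + now apply is_derive_Dm.
  - apply represented_lsum. intros [k1 k2 k3 P H d] Hin.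
    destruct (proj1 (List.Forall_forall _ _) HL _ Hin) as (Hk & Hr & He & HH).
    pose proof (HD k1 k2 k3 Hk (in_range_inF _ _ _ _ _ Hr)) as HDk.
    apply in_range_spec in Hr. simpl.
    apply represented_plus.
    + apply (represented_scale _ _ _ (k1 + 2 * k2) _ _ (pmul H H) d); [|lia|].
      * intros y Hy. rewrite peval_mul. apply Rmult_integral_contrapositive. auto.
      * apply representable_deriv_expr; [auto|apply in_range_spec; lia|lia].
    + apply (represented_weaken J' J' (S (k1 + k2 + k3)) (S r)
                                  (S (S (k1 + 2 * k2 + 2 * k3))) (S (S w))); auto; try lia.
      apply (represented_scale _ _ _ (k1 + 2 * k2) _ P H d _ HH); [lia|exact HDk].
Qed.
End Closure.

(** * Reduction to the index set F_r *)

(* The reductions are first proved within the classes [m_only] and [no_theta]; this breaks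
   the circularity between the theta-, v- and m-reductions. *)
Definition no_theta (k1 k2 k3 : nat) : Prop := k1 = 0%nat.
Definition m_only (k1 k2 k3 : nat) : Prop := k1 = 0%nat /\ k2 = 0%nat.
Definition any_index (k1 k2 k3 : nat) : Prop := True.

Lemma heat_equation : representable no_theta 2 2 2 (Dt (Dt skew_expr)).
Proof.
  exists (Entry 0 1 0 (2 :: nil) (1 :: nil) 0 ::
          Entry 0 0 1 (0 :: -1 :: 0 :: -1 :: nil) (1 :: nil) 1 :: nil).
  split.
  - repeat constructor; intros y _; simpl; lra.
  - intros x t v m Hv Hm. assert (Hs : sqrt v <> 0) by (apply Rgt_not_eq, sqrt_lt_R0, Hv).
    unfold eval_expr, lsum, eval_entry, coef, deriv_expr. simpl.
    replace (/ v) with (/ sqrt v * / sqrt v) by (rewrite <- Rinv_mult, sqrt_sqrt; lra).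
    field; auto.
Qed.

Lemma mixed_equation : representable m_only 2 4 2 (Dv (Dm skew_expr)).
Proof.
  exists (Entry 0 0 2 (-1 :: 0 :: -1 :: nil) (0 :: 2 :: nil) 1 ::
          Entry 0 0 1 (-1 :: nil) (1 :: nil) 1 :: nil).
  split.
  - repeat constructor; intros y Hy; simpl; try lra.
  - intros x t v m Hv Hm. assert (Hs : sqrt v <> 0) by (apply Rgt_not_eq, sqrt_lt_R0, Hv).
    unfold eval_expr, lsum, eval_entry, coef, deriv_expr. simpl.
    replace (/ v) with (/ sqrt v * / sqrt v) by (rewrite <- Rinv_mult, sqrt_sqrt; lra).
    field; auto.
Qed.

Lemma Dm_reduces_m_only : Dm_reduces m_only m_only.
Proof.
  intros k1 k2 k3 [-> ->] _.
  apply (representable_deriv_expr _ _ _ _ 0 0 (S k3));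
    [split; reflexivity|apply in_range_spec; lia|lia].
Qed.

Lemma representable_Dv_dm k :
  representable m_only (S (S k)) (2 * k + 4) 2 (Dv (deriv_expr 0 0 (S k))).
Proof.
  induction k as [|k IH]; [exact mixed_equation|].
  apply (representable_eq _ _ _ _ (Dm (Dv (deriv_expr 0 0 (S k))))).
  - apply expr_equiv_sym, Dv_Dm_comm.
  - eapply representable_le; [| | |apply (representable_Dm m_only m_only);
      [apply Dm_reduces_m_only|auto|exact IH]]; lia.
Qed.

Lemma Dv_reduces_no_theta : Dv_reduces no_theta no_theta.
Proof.
  intros k1 k2 k3 -> Hk. apply inF_spec in Hk as (_ & _ & [-> | [-> Hk3]]).
  - apply (representable_deriv_expr _ _ _ _ 0 (S k2) 0);
      [reflexivity|apply in_range_spec; lia|lia].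
  - destruct k3 as [|k]; [lia|].
    apply (represented_weaken m_only no_theta (S (S k)) _ (2 * k + 4)); try lia.
    + intros a b c [Ha _]. exact Ha.
    + apply representable_Dv_dm.
Qed.

Lemma representable_Dm_dv j :
  representable no_theta (S j) (S (S (2 * j))) (2 * j) (Dm (deriv_expr 0 j 0)).
Proof.
  induction j as [|j IH].
  - apply (representable_deriv_expr _ _ _ _ 0 0 1); [reflexivity|apply in_range_spec; lia|lia].
  - apply (representable_eq _ _ _ _ (Dv (Dm (deriv_expr 0 j 0)))); [apply Dv_Dm_comm|].
    eapply representable_le; [| | |apply (representable_Dv no_theta no_theta);
      [apply Dv_reduces_no_theta|auto|exact IH]]; lia.
Qed.

Lemma Dm_reduces_no_theta : Dm_reduces no_theta no_theta.
Proof.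
  intros k1 k2 k3 -> Hk. apply inF_spec in Hk as (_ & _ & [-> | [-> Hk3]]).
  - eapply representable_le; [| | |apply representable_Dm_dv]; lia.
  - apply (representable_deriv_expr _ _ _ _ 0 0 (S k3));
      [reflexivity|apply in_range_spec; lia|lia].
Qed.

Lemma representable_Dtt_dv j :
  representable no_theta (j + 2) (2 * j + 2) (2 * j + 2) (Dt (Dt (deriv_expr 0 j 0))).
Proof.
  induction j as [|j IH]; [exact heat_equation|].
  apply (representable_eq _ _ _ _ (Dv (Dt (Dt (deriv_expr 0 j 0))))).
  - apply expr_equiv_sym, (expr_equiv_trans _ (Dt (Dv (Dt (deriv_expr 0 j 0))))).
    + apply expr_equiv_Dt, Dt_Dv_comm.
    + apply Dt_Dv_comm.
  - eapply representable_le; [| | |apply (representable_Dv no_theta no_theta);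
      [apply Dv_reduces_no_theta|auto|exact IH]]; lia.
Qed.

Lemma representable_Dtt_dm k :
  representable no_theta (k + 2) (2 * k + 2) 2 (Dt (Dt (deriv_expr 0 0 k))).
Proof.
  induction k as [|k IH]; [exact heat_equation|].
  apply (representable_eq _ _ _ _ (Dm (Dt (Dt (deriv_expr 0 0 k))))).
  - apply expr_equiv_sym, (expr_equiv_trans _ (Dt (Dm (Dt (deriv_expr 0 0 k))))).
    + apply expr_equiv_Dt, Dt_Dm_comm.
    + apply Dt_Dm_comm.
  - eapply representable_le; [| | |apply (representable_Dm no_theta no_theta);
      [apply Dm_reduces_no_theta|auto|exact IH]]; lia.
Qed.

Lemma Dt_reduces_any J : Dt_reduces J any_index.
Proof.
  intros k1 k2 k3 _ Hk. apply inF_spec in Hk as (H1 & _ & H3).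
  destruct k1 as [|[|k1]]; [| |lia]; destruct H3 as [-> | [-> Hk3]].
  - apply (representable_deriv_expr _ _ _ _ 1 k2 0); [exact I|apply in_range_spec; lia|lia].
  - apply (representable_deriv_expr _ _ _ _ 1 0 k3); [exact I|apply in_range_spec; lia|lia].
  - apply (represented_weaken no_theta _ (k2 + 2) _ (2 * k2 + 2)); [easy|lia|lia|].
    eapply representable_le; [| | |apply representable_Dtt_dv]; lia.
  - apply (represented_weaken no_theta _ (k3 + 2) _ (2 * k3 + 2)); [easy|lia|lia|].
    eapply representable_le; [| | |apply representable_Dtt_dm]; lia.
Qed.

Lemma Dv_reduces_any J : Dv_reduces J any_index.
Proof.
  intros k1 k2 k3 _ Hk. pose proof Hk as Hk'. apply inF_spec in Hk' as (H1 & _ & H3).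
  destruct k1 as [|[|k1]]; [| |lia].
  - apply (represented_weaken no_theta _ (S (0 + k2 + k3)) _ (S (S (0 + 2 * k2 + 2 * k3))));
      [easy|lia|lia|].
    now apply Dv_reduces_no_theta.
  - apply (representable_eq _ _ _ _ (Dt (Dv (deriv_expr 0 k2 k3)))); [apply Dt_Dv_comm|].
    destruct H3 as [-> | [-> Hk3]].
    + apply (representable_deriv_expr _ _ _ _ 1 (S k2) 0);
        [exact I|apply in_range_spec; lia|lia].
    + destruct k3 as [|k]; [lia|].
      eapply representable_le; [| | |apply (representable_Dt m_only any_index);
        [apply Dt_reduces_any|apply representable_Dv_dm]]; lia.
Qed.

Lemma representable_in_F a1 a2 a3 :
  representable any_index (a1 + a2 + a3) (a1 + 2 * a2 + 2 * a3) (a1 + 2 * a2)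
    (deriv_expr a1 a2 a3).
Proof.
  induction a1 as [|a1 IH1].
  - induction a2 as [|a2 IH2].
    + apply representable_deriv_expr; [exact I|apply in_range_spec|lia].
      destruct a3; lia.
    + eapply representable_le; [| | |apply (representable_Dv any_index any_index);
        [apply Dv_reduces_any|auto|exact IH2]]; lia.
  - eapply representable_le; [| | |apply (representable_Dt any_index any_index);
      [apply Dt_reduces_any|exact IH1]]; lia.
Qed.

(** * Grouping the coefficients *)

Lemma sum_f_R0_zero f N : (forall k, (k <= N)%nat -> f k = 0) -> sum_f_R0 f N = 0.
Proof. intro Hf. rewrite (sum_eq _ (fun _ => 0)), sum_cte by exact Hf. ring. Qed.

Lemma sum_f_R0_delta f N k0 :
  (k0 <= N)%nat -> (forall k, k <> k0 -> f k = 0) -> sum_f_R0 f N = f k0.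
Proof.
  intros Hk Hf. induction N as [|N IH]; simpl.
  - now replace k0 with 0%nat by lia.
  - destruct (Nat.eq_dec k0 (S N)) as [->|Hne].
    + rewrite sum_f_R0_zero by (intros; apply Hf; lia). ring.
    + rewrite IH, (Hf (S N)) by lia. ring.
Qed.

Section IdxSum.
Variables a1 a2 a3 : nat.

Lemma idx_sum_ext F G : (forall k1 k2 k3, F k1 k2 k3 = G k1 k2 k3) ->
  idx_sum a1 a2 a3 F = idx_sum a1 a2 a3 G.
Proof.
  intro E. unfold idx_sum.
  apply sum_eq; intros; apply sum_eq; intros; apply sum_eq; intros. now rewrite E.
Qed.

Lemma idx_sum_plus F G :
  idx_sum a1 a2 a3 (fun k1 k2 k3 => F k1 k2 k3 + G k1 k2 k3) =
  idx_sum a1 a2 a3 F + idx_sum a1 a2 a3 G.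
Proof.
  unfold idx_sum. rewrite <- plus_sum. apply sum_eq; intros. rewrite <- plus_sum.
  apply sum_eq; intros. rewrite <- plus_sum. apply sum_eq; intros.
  destruct (idx _ _ _ _ _ _); ring.
Qed.

Lemma idx_sum_delta F k1 k2 k3 : idx a1 a2 a3 k1 k2 k3 = true ->
  (forall j1 j2 j3, (j1, j2, j3) <> (k1, k2, k3) -> F j1 j2 j3 = 0) ->
  idx_sum a1 a2 a3 F = F k1 k2 k3.
Proof.
  intros Hk HF. pose proof Hk as Hr.
  change (in_range (a1 + a2 + a3) (a1 + 2 * a2 + 2 * a3) k1 k2 k3 = true) in Hr.
  apply in_range_spec in Hr. unfold idx_sum.
  rewrite (sum_f_R0_delta _ _ k1), (sum_f_R0_delta _ _ k2), (sum_f_R0_delta _ _ k3), Hk;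
    try reflexivity; try lia; intros j Hj; repeat (apply sum_f_R0_zero; intros);
    (destruct (idx a1 a2 a3 _ _ _) in |- *; [apply HF; congruence|reflexivity]).
Qed.

(* The index (0, 0, 0) is always in range. *)
Lemma idx_sum_zero F : (forall k1 k2 k3, F k1 k2 k3 = 0) -> idx_sum a1 a2 a3 F = 0.
Proof. intro HF. rewrite (idx_sum_delta F 0 0 0); auto. Qed.

Definition index_eqb (j1 j2 j3 k1 k2 k3 : nat) : bool :=
  (j1 =? k1)%nat && (j2 =? k2)%nat && (j3 =? k3)%nat.

Lemma index_eqb_spec j1 j2 j3 k1 k2 k3 :
  index_eqb j1 j2 j3 k1 k2 k3 = true <-> (j1, j2, j3) = (k1, k2, k3).
Proof.
  unfold index_eqb. rewrite !andb_true_iff, !Nat.eqb_eq.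
  split; [intros [[-> ->] ->]; reflexivity|intro E; injection E; auto].
Qed.

Lemma idx_sum_indicator F k1 k2 k3 : idx a1 a2 a3 k1 k2 k3 = true ->
  idx_sum a1 a2 a3 (fun j1 j2 j3 => if index_eqb j1 j2 j3 k1 k2 k3 then F j1 j2 j3 else 0) =
  F k1 k2 k3.
Proof.
  intro Hk. rewrite (idx_sum_delta _ k1 k2 k3 Hk).
  - unfold index_eqb. now rewrite !Nat.eqb_refl.
  - intros j1 j2 j3 Hj. destruct (index_eqb j1 j2 j3 k1 k2 k3) eqn:E; [|reflexivity].
    now apply index_eqb_spec in E.
Qed.
End IdxSum.

Lemma coef_add P1 H1 P2 H2 d v m : peval H1 m <> 0 -> peval H2 m <> 0 ->
  coef P1 H1 d v m + coef P2 H2 d v m = coef (padd (pmul P1 H2) (pmul P2 H1)) (pmul H1 H2) d v m.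
Proof. intros. unfold coef. rewrite peval_add, !peval_mul. field. auto. Qed.

Lemma entries_grouped a1 a2 a3 J L :
  List.Forall (admissible J (a1 + a2 + a3) (a1 + 2 * a2 + 2 * a3) (a1 + 2 * a2)) L ->
  exists P H : nat -> nat -> nat -> rpoly,
    (forall k1 k2 k3, nonvanishing (H k1 k2 k3)) /\
    forall x t v m, m <> 0 ->
      lsum (eval_entry x t v m) L =
      idx_sum a1 a2 a3 (fun k1 k2 k3 =>
        coef (P k1 k2 k3) (H k1 k2 k3) ((a1 + 2 * a2 - k1 - 2 * k2) / 2) v m
        * eval_expr x t v m (deriv_expr k1 k2 k3)).
Proof.
  intro HL. induction HL as [|[k1 k2 k3 P0 H0 d] L (_ & Hk & Hd & HH0) _ [P [H [HH EL]]]].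
  - exists (fun _ _ _ => nil), (fun _ _ _ => 1 :: nil). split.
    + intros k1 k2 k3 m _. simpl. lra.
    + intros x t v m _. simpl. symmetry. apply idx_sum_zero. intros. unfold coef. simpl. field.
  - exists (fun j1 j2 j3 => if index_eqb j1 j2 j3 k1 k2 k3
                            then padd (pmul P0 (H j1 j2 j3)) (pmul (P j1 j2 j3) H0)
                            else P j1 j2 j3),
           (fun j1 j2 j3 => if index_eqb j1 j2 j3 k1 k2 k3
                            then pmul H0 (H j1 j2 j3) else H j1 j2 j3).
    split.
    + intros j1 j2 j3 m Hm. destruct (index_eqb j1 j2 j3 k1 k2 k3); [|now apply HH].
      rewrite peval_mul. apply Rmult_integral_contrapositive. split; [now apply HH0|now apply HH].
    + intros x t v m Hm. rewrite lsum_cons, EL by exact Hm. cbn [eval_entry].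
      assert (Ed : ((a1 + 2 * a2 - k1 - 2 * k2) / 2 = d)%nat).
      { rewrite <- Hd. replace (2 * d + k1 + 2 * k2 - k1 - 2 * k2)%nat with (d * 2)%nat by lia.
        apply Nat.div_mul. lia. }
      rewrite <- (idx_sum_indicator a1 a2 a3
        (fun j1 j2 j3 => coef P0 H0 d v m * eval_expr x t v m (deriv_expr j1 j2 j3)) _ _ _ Hk).
      rewrite <- idx_sum_plus. apply idx_sum_ext. intros j1 j2 j3.
      destruct (index_eqb j1 j2 j3 k1 k2 k3) eqn:E; [|ring].
      apply index_eqb_spec in E. injection E as -> -> ->.
      rewrite Ed, <- coef_add by (apply HH0 || apply HH; exact Hm). ring.
Qed.

Theorem lemma4p2 :
  forall a1 a2 a3 : nat,
  exists (P H Q : nat -> nat -> nat -> rpoly),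
    (forall k1 k2 k3, idx a1 a2 a3 k1 k2 k3 = true ->
       (forall m, m <> 0 -> peval (H k1 k2 k3) m <> 0) /\
       (forall v, 0 < v -> peval (Q k1 k2 k3) v <> 0)) /\
    (forall x theta v m, 0 < v -> m <> 0 ->
       pderiv a1 a2 a3 (skewf x) theta v m =
       idx_sum a1 a2 a3 (fun k1 k2 k3 =>
         peval (P k1 k2 k3) m / (peval (H k1 k2 k3) m * peval (Q k1 k2 k3) v)
         * pderiv k1 k2 k3 (skewf x) theta v m)).
Proof.
  intros a1 a2 a3.
  destruct (representable_in_F a1 a2 a3) as [L [HL EL]].
  destruct (entries_grouped a1 a2 a3 _ L HL) as [P [H [HH EH]]].
  exists P, H, (fun k1 k2 k3 => pXn ((a1 + 2 * a2 - k1 - 2 * k2) / 2)). split.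
  - intros k1 k2 k3 _. split; [apply HH|].
    intros v Hv. rewrite peval_Xn. apply pow_nonzero. lra.
  - intros x t v m Hv Hm.
    rewrite (represents_pderiv x a1 a2 a3 t v m Hv), EL, EH by assumption.
    apply idx_sum_ext. intros k1 k2 k3.
    rewrite (represents_pderiv x k1 k2 k3 t v m Hv), peval_Xn.
    unfold coef, Rdiv. rewrite Rinv_mult, pow_inv. ring.
Qed.
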